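(* Let $X$ be a geodesic metric space which is a $(\tau,\eta)$-tight network with respect to a collection $\mathcal L$ of subsets. For every $M\ge0$ there exists $R=R(M)$ such that for every $L,L'\in\mathcal L$ with $\mathcal N_M(L)\cap\mathcal N_M(L')\neq\emptyset$ and any point $a\in\mathcal N_M(L)\cap\mathcal N_M(L')$, there exists a sequence $L_1=L,L_2,\dots,L_n=L'$ with $L_i\in\mathcal L$ and $n\le R$ such that for all $1\le i<n$, $\mathcal N_\tau(L_i)\cap\mathcal N_\tau(L_{i+1})$ has infinite diameter, is $\eta$-path connected, and intersects $B(a,R)$.
   Context: $\mathcal N_R(A)=\{z:\mathrm{dist}(z,A)<R\}$, $B(a,R)$ open ball. A $(\lambda,\kappa)$-quasi-geodesic satisfies $\frac1\lambda|s-t|-\kappa\le\mathrm{dist}(q(s),q(t))\le\lambda|s-t|+\kappa$. A subset $A$ is $(\tau,\eta)$-quasi-convex if any two of its points are joined by an $(\eta,\eta)$-quasi-geodesic in $\mathcal N_\tau(A)$, and $\eta$-path connected if any two of its points are joined by a path in $\mathcal N_\eta(A)$. $X$ is a $(\tau,\eta)$-tight network with respect to $\mathcal L$ if each $L\in\mathcal L$ (induced metric) is $(\tau,\eta)$-quasi-convex, $X=\bigcup_{L\in\mathcal L}\mathcal N_\tau(L)$, and for any $L,L'\in\mathcal L$ and any point $z$ such that $B(z,3\tau)$ meets both $L$ and $L'$, there is a sequence $L=L_1,\dots,L_k=L'$ in $\mathcal L$, $k\le\eta$, with each $\mathcal N_\tau(L_i)\cap\mathcal N_\tau(L_{i+1})$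 of infinite diameter, $\eta$-path connected and meeting $B(z,\eta)$. *)

From Stdlib Require Import Reals.
Open Scope R_scope.

Set Implicit Arguments.
Section Metric.
Variable T : Type.
Variable d : T -> T -> R.

Definition is_metric : Prop :=
  (forall x y, 0 <= d x y) /\ (forall x y, d x y = 0 <-> x = y) /\
  (forall x y, d x y = d y x) /\ (forall x y z, d x z <= d x y + d y z).

(* N_r(A) = { z | dist(z,A) < r }  (dist(z,A) < r iff some w in A has d z w < r) *)
Definition nbhd (r : R) (A : T -> Prop) : T -> Prop :=
  fun z => exists w, A w /\ d z w < r.

Definition ball (a : T) (r : R) : T -> Prop := fun z => d a z < r.

Definition geodesic_space : Prop :=
  forall x y, exists g : R -> T, g 0 = x /\ g (d x y) = y /\
    forall s t, 0 <= s <= d x y -> 0 <= t <= d x y -> d (g s) (g t) = Rabs (s - t).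

Definition quasi_geodesic (lam kap l : R) (q : R -> T) : Prop :=
  forall s t, 0 <= s <= l -> 0 <= t <= l ->
    / lam * Rabs (s - t) - kap <= d (q s) (q t) /\
    d (q s) (q t) <= lam * Rabs (s - t) + kap.

Definition quasi_convex (tau eta : R) (A : T -> Prop) : Prop :=
  forall x y, A x -> A y -> exists (l : R) (q : R -> T),
    0 <= l /\ q 0 = x /\ q l = y /\ quasi_geodesic eta eta l q /\
    forall s, 0 <= s <= l -> nbhd tau A (q s).

Definition cont_on01 (g : R -> T) : Prop :=
  forall s, 0 <= s <= 1 -> forall eps, 0 < eps -> exists del, 0 < del /\
    forall t, 0 <= t <= 1 -> Rabs (t - s) < del -> d (g s) (g t) < eps.

Definition path_connected_in (eta : R) (A : T -> Prop) : Prop :=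
  forall x y, A x -> A y -> exists g : R -> T,
    cont_on01 g /\ g 0 = x /\ g 1 = y /\
    forall s, 0 <= s <= 1 -> nbhd eta A (g s).

Definition infinite_diam (A : T -> Prop) : Prop :=
  forall r : R, exists x y, A x /\ A y /\ r < d x y.

Definition inter (A B : T -> Prop) : T -> Prop := fun z => A z /\ B z.

Definition tight_network (tau eta : R) (coll : (T -> Prop) -> Prop) : Prop :=
  (forall L, coll L -> quasi_convex tau eta L) /\
  (forall z, exists L, coll L /\ nbhd tau L z) /\
  (forall L L' z, coll L -> coll L' ->
     (exists w, L w /\ d z w < 3 * tau) -> (exists w, L' w /\ d z w < 3 * tau) ->
     exists (k : nat) (f : nat -> T -> Prop),
       (1 <= k)%nat /\ INR k <= eta /\ f 1%nat = L /\ f k = L' /\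
       (forall i, (1 <= i <= k)%nat -> coll (f i)) /\
       (forall i, (1 <= i < k)%nat ->
          let I := inter (nbhd tau (f i)) (nbhd tau (f (S i))) in
          infinite_diam I /\ path_connected_in eta I /\
          exists w, I w /\ d z w < eta)).

End Metric.

(* Walk along a geodesic from a point of L near a to a point of L' near a, in steps shorter
   than tau; the number of steps depends only on M.  Each step point lies within tau of some
   member of the collection, so consecutive members come 3tau-close to a common point and the
   tight-network axiom links them by at most eta members, with linking sets meeting a ball of
   radius eta around a step point.  Concatenating these links gives the required sequence. *)

From Stdlib Require Import Reals Lra Lia.
Open Scope R_scope.
Set Implicit Arguments.

Section Neighbourhoods.
Variable T : Type.
Variable d : T -> T -> R.
Hypothesis d_metric : is_metric d.

Lemma dist_self (z : T) : d z z = 0.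
Proof. destruct d_metric as [_ [d_zero _]]. exact (proj2 (d_zero z z) eq_refl). Qed.

Lemma nbhd_shift (r r' : R) (A : T -> Prop) (z z' : T) :
  d z z' + r <= r' -> nbhd d r A z' -> nbhd d r' A z.
Proof.
  destruct d_metric as [_ [_ [_ d_tri]]].
  intros Hr [w [Aw dw]]. exists w. split; [exact Aw|].
  specialize (d_tri z z' w). lra.
Qed.

Lemma nbhd_radius_pos (r : R) (A : T -> Prop) (z : T) : nbhd d r A z -> 0 < r.
Proof.
  destruct d_metric as [d_pos _]. intros [w [_ dw]]. specialize (d_pos z w). lra.
Qed.

End Neighbourhoods.

Lemma geodesic_subdivision (T : Type) (d : T -> T -> R) (x y : T) (N : nat) :
  is_metric d -> geodesic_space d -> (0 < N)%nat ->
  exists p : nat -> T, p 0%nat = x /\ p N = y /\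
    (forall j, (j < N)%nat -> d (p j) (p (S j)) = d x y / INR N) /\
    (forall j, (j <= N)%nat -> d x (p j) <= d x y).
Proof.
  intros [d_pos _] Hgeod HN.
  destruct (Hgeod x y) as [g [g0 [gD gd]]].
  pose proof (d_pos x y) as D_pos.
  set (D := d x y) in *.
  assert (N_pos : 0 < INR N) by (apply lt_0_INR; exact HN).
  set (t j := INR j * D / INR N).
  assert (t_range : forall j, (j <= N)%nat -> 0 <= t j <= D).
  { intros j Hj. apply le_INR in Hj. pose proof (pos_INR j).
    assert (Ht : t j * INR N = INR j * D) by (unfold t; field; lra).
    split; nra. }
  exists (fun j => g (t j)). split; [|split; [|split]].
  - unfold t. replace (INR 0 * D / INR N) with 0 by (simpl; field; lra). exact g0.
  - unfold t. replace (INR N * D / INR N) with D by (field; lra). exact gD.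
  - intros j Hj. rewrite gd by (apply t_range; lia).
    unfold t. rewrite S_INR.
    replace (INR j * D / INR N - (INR j + 1) * D / INR N) with (- (D / INR N)) by (field; lra).
    rewrite Rabs_Ropp, Rabs_right; [reflexivity|].
    apply Rle_ge, Rmult_le_pos; [lra | left; apply Rinv_0_lt_compat; lra].
  - intros j Hj. rewrite <- g0 at 1. rewrite gd by (try apply t_range; lia || lra).
    destruct (t_range j Hj). rewrite Rminus_0_l, Rabs_Ropp, Rabs_right; lra.
Qed.

Section Chains.
Variable T : Type.
Variable d : T -> T -> R.
Variables tau eta : R.
Variable coll : (T -> Prop) -> Prop.
Variable a : T.
Variable r : R.
Hypothesis d_metric : is_metric d.
Hypothesis tight : tight_network d tau eta coll.

Lemma tight_network_tau_pos (z : T) : 0 < tau.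
Proof.
  destruct tight as [_ [covered _]]. destruct (covered z) as [L [_ z_near]].
  exact (nbhd_radius_pos d_metric z_near).
Qed.

Definition linked (A B : T -> Prop) : Prop :=
  let I := inter (nbhd d tau A) (nbhd d tau B) in
  infinite_diam d I /\ path_connected_in d eta I /\ exists w, I w /\ ball d a r w.

Definition chain (n : nat) (A B : T -> Prop) : Prop :=
  exists f : nat -> T -> Prop, (1 <= n)%nat /\ f 1%nat = A /\ f n = B /\
    (forall i, (1 <= i <= n)%nat -> coll (f i)) /\
    (forall i, (1 <= i < n)%nat -> linked (f i) (f (S i))).

Lemma chain_length_pos (n : nat) (A B : T -> Prop) : chain n A B -> (1 <= n)%nat.
Proof. intros [f [Hn _]]. exact Hn. Qed.

(* The shared member B is counted once: the second chain is reindexed by [i + 1 - n1]. *)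
Lemma chain_cat (n1 n2 : nat) (A B C : T -> Prop) :
  chain n1 A B -> chain n2 B C -> chain (n1 + n2 - 1) A C.
Proof.
  intros [f1 [Hn1 [f1_first [f1_last [f1_coll f1_link]]]]]
         [f2 [Hn2 [f2_first [f2_last [f2_coll f2_link]]]]].
  exists (fun i => if Nat.leb i n1 then f1 i else f2 (i + 1 - n1)%nat).
  split; [lia|split; [|split; [|split]]]; cbv beta.
  - destruct (Nat.leb_spec 1 n1); [exact f1_first | lia].
  - destruct (Nat.leb_spec (n1 + n2 - 1) n1).
    + replace (n1 + n2 - 1)%nat with n1 by lia.
      replace n2 with 1%nat in f2_last by lia. congruence.
    + replace (n1 + n2 - 1 + 1 - n1)%nat with n2 by lia. exact f2_last.
  - intros i Hi. destruct (Nat.leb_spec i n1); [apply f1_coll | apply f2_coll]; lia.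
  - intros i Hi. destruct (Nat.leb_spec i n1), (Nat.leb_spec (S i) n1); try lia.
    + apply f1_link; lia.
    + replace i with n1 by lia. replace (S n1 + 1 - n1)%nat with 2%nat by lia.
      rewrite f1_last, <- f2_first. apply f2_link; lia.
    + replace (S i + 1 - n1)%nat with (S (i + 1 - n1)) by lia. apply f2_link; lia.
Qed.

Lemma tight_chain (A B : T -> Prop) (z : T) :
  coll A -> coll B -> nbhd d (3 * tau) A z -> nbhd d (3 * tau) B z -> d a z + eta <= r ->
  exists k, INR k <= eta /\ chain k A B.
Proof.
  destruct d_metric as [_ [_ [_ d_tri]]]. destruct tight as [_ [_ tight_link]].
  intros HA HB Az Bz Hr.
  destruct (tight_link A B z HA HB Az Bz)
    as [k [f [Hk [Hk_eta [f_first [f_last [f_coll f_link]]]]]]].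
  exists k. split; [exact Hk_eta|].
  exists f. do 4 (split; [assumption|]).
  intros i Hi. destruct (f_link i Hi) as [Hdiam [Hpath [w [Iw dw]]]].
  split; [exact Hdiam|]. split; [exact Hpath|].
  exists w. split; [exact Iw|]. unfold ball. specialize (d_tri a z w). lra.
Qed.

(* The bound grows by eta per step; the first step already costs a tight link, hence [S j]. *)
Lemma chain_along_path (p : nat -> T) (N : nat) (L : T -> Prop) :
  (forall j, (j < N)%nat -> d (p j) (p (S j)) < tau) ->
  (forall j, (j <= N)%nat -> d a (p j) + eta <= r) ->
  coll L -> nbhd d tau L (p 0%nat) ->
  forall j, (j <= N)%nat -> forall B, coll B -> nbhd d tau B (p j) ->
  exists n, INR n <= INR (S j) * eta /\ chain n L B.
Proof.
  destruct tight as [_ [covered _]].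
  intros steps near_a HL L_near.
  assert (tau_pos : 0 < tau) by exact (nbhd_radius_pos d_metric L_near).
  assert (widen : forall A z, nbhd d tau A z -> nbhd d (3 * tau) A z).
  { intros A z. apply (nbhd_shift d_metric). rewrite (dist_self d_metric). lra. }
  induction j as [|j IH]; intros Hj B HB B_near.
  - destruct (tight_chain HL HB (widen _ _ L_near) (widen _ _ B_near) (near_a 0%nat Hj))
      as [k [Hk Hchain]].
    exists k. split; [simpl; lra | exact Hchain].
  - destruct (covered (p j)) as [S0 [HS0 S0_near]].
    destruct (IH ltac:(lia) S0 HS0 S0_near) as [n [Hn chain_L_S0]].
    assert (B_near_pj : nbhd d (3 * tau) B (p j)).
    { apply (nbhd_shift d_metric) with (r := tau) (z' := p (S j)); [|exact B_near].
      specialize (steps j ltac:(lia)). lra. }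
    destruct (tight_chain HS0 HB (widen _ _ S0_near) B_near_pj (near_a j ltac:(lia)))
      as [k [Hk chain_S0_B]].
    pose proof (chain_length_pos chain_L_S0). pose proof (chain_length_pos chain_S0_B).
    exists (n + k - 1)%nat. split.
    + rewrite minus_INR, plus_INR by lia. rewrite (S_INR (S j)). simpl (INR 1). lra.
    + exact (chain_cat chain_L_S0 chain_S0_B).
Qed.

Lemma chain_between_points (N : nat) (L L' : T -> Prop) (x x' : T) :
  geodesic_space d -> (0 < N)%nat -> d x x' < INR N * tau ->
  d a x + d x x' + eta <= r ->
  coll L -> coll L' -> L x -> L' x' ->
  exists n, INR n <= INR (S N) * eta /\ chain n L L'.
Proof.
  destruct d_metric as [_ [_ [_ d_tri]]].
  intros Hgeod HN Hlong Hr HL HL' Lx L'x'.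
  assert (N_pos : 0 < INR N) by (apply lt_0_INR; exact HN).
  assert (tau_pos : 0 < tau).
  { pose proof (proj1 d_metric x x'). nra. }
  destruct (geodesic_subdivision x x' d_metric Hgeod HN)
    as [p [p_first [p_last [p_steps p_near_x]]]].
  assert (steps : forall j, (j < N)%nat -> d (p j) (p (S j)) < tau).
  { intros j Hj. rewrite (p_steps j Hj).
    assert (d x x' / INR N * INR N = d x x') by (field; lra). nra. }
  assert (near_a : forall j, (j <= N)%nat -> d a (p j) + eta <= r).
  { intros j Hj. specialize (d_tri a x (p j)). specialize (p_near_x j Hj). lra. }
  assert (L_near : nbhd d tau L (p 0%nat)).
  { exists x. split; [exact Lx|]. rewrite p_first, (dist_self d_metric). exact tau_pos. }
  assert (L'_near : nbhd d tau L' (p N)).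
  { exists x'. split; [exact L'x'|]. rewrite p_last, (dist_self d_metric). exact tau_pos. }
  exact (chain_along_path p steps near_a HL L_near (le_n N) HL' L'_near).
Qed.

End Chains.

Theorem corollary4p7 (T : Type) (d : T -> T -> R) (tau eta : R)
  (coll : (T -> Prop) -> Prop) :
  is_metric d -> geodesic_space d -> tight_network d tau eta coll ->
  forall M : R, 0 <= M -> exists Rb : R,
    forall L L', coll L -> coll L' ->
      (exists z, inter (nbhd d M L) (nbhd d M L') z) ->
      forall a, inter (nbhd d M L) (nbhd d M L') a ->
      exists (n : nat) (f : nat -> T -> Prop),
        (1 <= n)%nat /\ INR n <= Rb /\ f 1%nat = L /\ f n = L' /\
        (forall i, (1 <= i <= n)%nat -> coll (f i)) /\
        (forall i, (1 <= i < n)%nat ->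
           let I := inter (nbhd d tau (f i)) (nbhd d tau (f (S i))) in
           infinite_diam d I /\ path_connected_in d eta I /\
           exists w, I w /\ ball d a Rb w).
Proof.
  intros Hmetric Hgeod Htight M HM.
  pose proof Hmetric as [_ [_ [d_sym d_tri]]].
  destruct (Rlt_dec 0 tau) as [tau_pos|tau_nonpos].
  2: { exists 0. intros L L' _ _ _ a _.
       exact (False_ind _ (tau_nonpos (tight_network_tau_pos Hmetric Htight a))). }
  destruct (INR_archimed tau (2 * M) tau_pos) as [m Hm].
  set (N := S m).
  set (Rb := 3 * M + (INR N + 2) * Rabs eta).
  exists Rb.
  intros L L' HL HL' _ a [[x [Lx dax]] [x' [L'x' dax']]].
  assert (Dx : d x x' < 2 * M).
  { specialize (d_tri x a x'). rewrite (d_sym x a) in d_tri. lra. }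
  assert (long : d x x' < INR N * tau) by (unfold N; rewrite S_INR; nra).
  pose proof (Rle_abs eta) as eta_abs. pose proof (Rabs_pos eta). pose proof (pos_INR N).
  assert (radius : d a x + d x x' + eta <= Rb) by (unfold Rb; nra).
  destruct (chain_between_points a Hmetric Htight L L' x x' Hgeod (Nat.lt_0_succ m)
              long radius HL HL' Lx L'x')
    as [n [Hn [f [Hn1 [f_first [f_last [f_coll f_link]]]]]]].
  assert (bound : INR (S N) * eta <= Rb).
  { unfold Rb. rewrite S_INR. apply Rmult_le_compat_l with (r := INR N + 1) in eta_abs; lra. }
  change (INR n <= INR (S N) * eta) in Hn.
  exists n, f. split; [exact Hn1|]. split; [lra|].
  do 3 (split; [assumption|]). exact f_link.
Qed.
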